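(* Let $\mathcal{T}$ be the law on $[0,\infty]$ with tail function $\overline{F}=\tfrac12\mathbf{1}_{[0,1)}+\tfrac14\mathbf{1}_{[1,\frac32)}+\tfrac16\mathbf{1}_{[\frac32,\infty)}$ (so $\mathcal{T}(\{0\})=\tfrac12$, $\mathcal{T}(\{1\})=\tfrac14$, $\mathcal{T}(\{\tfrac32\})=\tfrac1{12}$, $\mathcal{T}(\{\infty\})=\tfrac16$). Then $\mathcal{T}^{\mathrm{Exp}(\mu)}\leq_{\mathrm{st}}\mathcal{T}$ for all $\mu\in(0,\infty)$, but there exists a reset law $\mathcal{R}$ (indeed one of the form $\delta_r$, $r\in(0,\infty)$) such that $\mathcal{T}^{\mathcal{R}}\leq_{\mathrm{st}}\mathcal{T}$ fails.
   Context: A reset law is a probability law $\mathcal{R}$ on the Borel sets of $[0,\infty]$ with $\mathcal{R}((0,\infty])>0$ and $\mathcal{R}([0,\infty))>0$. Given a reset law $\mathcal{R}$: let $(T_k)$ be i.i.d. with law $\mathcal{T}$ and $(R_k)$ an independent i.i.d. sequence with law $\mathcal{R}$; $\mathcal{T}^{\mathcal{R}}$ is the law of $\tilde T$ defined a.s. by $\tilde T=R_1+\cdots+R_{k-1}+T_k$ on $\{R_1<T_1,\ldots,R_{k-1}<T_{k-1},T_k\leq R_k\}$, $k\in\mathbb{N}$. $\delta_r$ is the Dirac mass at $r$, $\mathrm{Exp}(\mu)$ the exponential law with mean $\mu^{-1}$. $\mathcal{A}\leq_{\mathrm{st}}\mathcal{B}$ means $\mathcal{A}((t,\infty])\leq\mathcal{B}((t,\infty])$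 for all $t\in[0,\infty)$. *)

From Stdlib Require Import Reals Lra List.
Open Scope R_scope.

Inductive Rbar : Type := Fin (x : R) | Inf.

Definition Rbar_lt (a b : Rbar) : Prop :=
  match a, b with
  | Fin x, Fin y => x < y
  | Fin _, Inf => True
  | Inf, _ => False
  end.

Definition Rbar_le (a b : Rbar) : Prop :=
  match a, b with
  | Fin x, Fin y => x <= y
  | _, Inf => True
  | Inf, Fin _ => False
  end.

Definition Rbar_plus (a b : Rbar) : Rbar :=
  match a, b with
  | Fin x, Fin y => Fin (x + y)
  | _, _ => Inf
  end.

Fixpoint Rbar_psum (f : nat -> Rbar) (k : nat) : Rbar :=
  match k with
  | O => Fin 0
  | S k' => Rbar_plus (Rbar_psum f k') (f k')
  end.

Record ProbSpace := {
  Omega : Type;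
  meas : (Omega -> Prop) -> Prop;
  Pr : (Omega -> Prop) -> R;
  meas_full : meas (fun _ => True);
  meas_compl : forall A, meas A -> meas (fun w => ~ A w);
  meas_union : forall A : nat -> Omega -> Prop,
      (forall n, meas (A n)) -> meas (fun w => exists n, A n w);
  Pr_nonneg : forall A, meas A -> 0 <= Pr A;
  Pr_full : Pr (fun _ => True) = 1;
  Pr_sigma_add : forall A : nat -> Omega -> Prop,
      (forall n, meas (A n)) ->
      (forall m n w, m <> n -> A m w -> A n w -> False) ->
      infinite_sum (fun n => Pr (A n)) (Pr (fun w => exists n, A n w))
}.

(* A [0,oo]-valued random variable (measurable w.r.t. the half-lines
   (t, oo], which generate the Borel sigma-algebra of [-oo..oo]). *)
Definition rv (S : ProbSpace) (X : Omega S -> Rbar) : Prop :=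
  forall t : R, meas S (fun w => Rbar_lt (Fin t) (X w)).

Definition has_tail (S : ProbSpace) (X : Omega S -> Rbar) (G : R -> R) : Prop :=
  Pr S (fun w => Rbar_lt (X w) (Fin 0)) = 0 /\
  forall t : R, 0 <= t -> Pr S (fun w => Rbar_lt (Fin t) (X w)) = G t.

(* Mutual independence of a family of random variables, tested on the
   pi-system generating their sigma-algebras: finite intersections of
   events {X_i > t_i} for distinct indices. *)
Definition indep {I : Type} (S : ProbSpace) (X : I -> Omega S -> Rbar) : Prop :=
  forall (l : list I) (th : I -> R), NoDup l ->
    Pr S (fun w => Forall (fun i => Rbar_lt (Fin (th i)) (X i w)) l) =
    fold_right Rmult 1 (map (fun i => Pr S (fun w => Rbar_lt (Fin (th i)) (X i w))) l).

Definition reset_setup (S : ProbSpace) (T Rs : nat -> Omega S -> Rbar)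
    (GT GR : R -> R) : Prop :=
  (forall k, rv S (T k)) /\ (forall k, rv S (Rs k)) /\
  (forall k, has_tail S (T k) GT) /\ (forall k, has_tail S (Rs k) GR) /\
  indep S (fun i : nat + nat => match i with inl k => T k | inr k => Rs k end).

(* The event {Ttilde > t}, where (a.s.) Ttilde = R_0+...+R_(k-1) + T_k on
   {R_0 < T_0, ..., R_(k-1) < T_(k-1), T_k <= R_k} (0-indexed). *)
Definition tilde_gt (S : ProbSpace) (T Rs : nat -> Omega S -> Rbar) (t : R)
    : Omega S -> Prop :=
  fun w => exists k : nat,
    (forall j, (j < k)%nat -> Rbar_lt (Rs j w) (T j w)) /\
    Rbar_le (T k w) (Rs k w) /\
    Rbar_lt (Fin t) (Rbar_plus (Rbar_psum (fun j => Rs j w) k) (T k w)).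

Definition tilde_st_le (S : ProbSpace) (T Rs : nat -> Omega S -> Rbar)
    (G : R -> R) : Prop :=
  forall t : R, 0 <= t -> Pr S (tilde_gt S T Rs t) <= G t.

Definition Tbar (t : R) : R :=
  if Rlt_dec t 1 then 1/2 else if Rlt_dec t (3/2) then 1/4 else 1/6.

Definition exp_tail (mu : R) (t : R) : R := exp (- mu * t).
Definition dirac_tail (r : R) (t : R) : R := if Rlt_dec t r then 1 else 0.

(* Both halves compare the event {Ttilde > t} with explicit "scenarios": finite sequences
   of rounds, each prescribing an interval for T_j and one for R_j. *)

From Stdlib Require Import Reals Lra Lia List ZArith.
From Stdlib Require Import Classical FunctionalExtensionality PropExtensionality.
Import ListNotations.
Open Scope R_scope.

Section ProbabilityBasics.
Variable PS : ProbSpace.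
Implicit Types A B : Omega PS -> Prop.

Lemma event_ext A B : (forall w, A w <-> B w) -> A = B.
Proof.
  intros H; apply functional_extensionality; intros w.
  apply propositional_extensionality, H.
Qed.

Lemma meas_equiv A B : (forall w, A w <-> B w) -> meas PS A -> meas PS B.
Proof. intros H; rewrite (event_ext A B H); auto. Qed.

Lemma Pr_equiv A B : (forall w, A w <-> B w) -> Pr PS A = Pr PS B.
Proof. intros H; rewrite (event_ext A B H); auto. Qed.

Lemma meas_const (P : Prop) : meas PS (fun _ => P).
Proof.
  destruct (classic P) as [HP | HP].
  - apply (meas_equiv (fun _ => True)); [tauto | apply meas_full].
  - apply (meas_equiv (fun _ => ~ True)); [tauto | apply meas_compl, meas_full].
Qed.

Lemma meas_or A B : meas PS A -> meas PS B -> meas PS (fun w => A w \/ B w).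
Proof.
  intros HA HB.
  apply (meas_equiv (fun w => exists n : nat, (match n with O => A | _ => B end) w)).
  - intros w; split.
    + intros [[|n] H]; auto.
    + intros [H | H]; [exists O | exists 1%nat]; auto.
  - apply meas_union; intros [|n]; auto.
Qed.

Lemma meas_and A B : meas PS A -> meas PS B -> meas PS (fun w => A w /\ B w).
Proof.
  intros HA HB.
  apply (meas_equiv (fun w => ~ (~ A w \/ ~ B w))); [intros w; tauto |].
  apply meas_compl, meas_or; apply meas_compl; auto.
Qed.

Lemma meas_impl (P : Prop) A : meas PS A -> meas PS (fun w => P -> A w).
Proof.
  intros HA.
  apply (meas_equiv (fun w => ~ P \/ A w)); [intros w; tauto |].
  apply meas_or; [apply meas_const | exact HA].
Qed.

Lemma meas_all (A : nat -> Omega PS -> Prop) :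
  (forall n, meas PS (A n)) -> meas PS (fun w => forall n, A n w).
Proof.
  intros HA.
  apply (meas_equiv (fun w => ~ exists n, ~ A n w)).
  - intros w; split; [intros H n; apply NNPP; intros Hn; eauto | intros H [n Hn]; auto].
  - apply meas_compl, meas_union; intros n; apply meas_compl, HA.
Qed.

Lemma meas_Forall {I : Type} (E : I -> Omega PS -> Prop) (l : list I) :
  (forall i, meas PS (E i)) -> meas PS (fun w => Forall (fun i => E i w) l).
Proof.
  intros HE; induction l as [|i l IH].
  - apply (meas_equiv (fun _ => True)); [intros w; split; auto | apply meas_full].
  - apply (meas_equiv (fun w => E i w /\ Forall (fun i => E i w) l)).
    + intros w; rewrite Forall_cons_iff; tauto.
    + apply meas_and; auto.
Qed.

Lemma meas_Exists {I : Type} (E : I -> Omega PS -> Prop) (l : list I) :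
  (forall i, meas PS (E i)) -> meas PS (fun w => Exists (fun i => E i w) l).
Proof.
  intros HE; induction l as [|i l IH].
  - apply (meas_equiv (fun _ => False)); [| apply meas_const].
    intros w; split; [intros [] | inversion 1].
  - apply (meas_equiv (fun w => E i w \/ Exists (fun i => E i w) l)).
    + intros w; rewrite Exists_cons; tauto.
    + apply meas_or; auto.
Qed.

(* The empty event is null: the constant series Pr(empty) converges to Pr(empty). *)
Lemma Pr_empty : Pr PS (fun _ => False) = 0.
Proof.
  pose proof (Pr_sigma_add PS (fun _ _ => False) (fun _ => meas_const False)
                (fun _ _ _ _ H _ => H)) as Hsum; cbv beta in Hsum.
  rewrite (Pr_equiv (fun w => exists _ : nat, False) (fun _ => False)) in Hsum
    by (intros w; split; [intros [_ []] | tauto]).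
  set (c := Pr PS (fun _ => False)) in *.
  assert (Hc : 0 <= c) by apply Pr_nonneg, meas_const.
  destruct (Rle_lt_or_eq_dec 0 c Hc) as [Hpos | Hzero]; [exfalso | auto].
  destruct (Hsum c Hpos) as [N HN].
  specialize (HN (S N) (Nat.le_succ_diag_r N)).
  unfold Rdist in HN; rewrite sum_cte, !S_INR in HN.
  pose proof (pos_INR N).
  rewrite Rabs_right in HN by nra; nra.
Qed.

(* Finite additivity, from countable additivity padded with empty events. *)
Lemma Pr_add A B : meas PS A -> meas PS B -> (forall w, A w -> B w -> False) ->
  Pr PS (fun w => A w \/ B w) = Pr PS A + Pr PS B.
Proof.
  intros HA HB Hdisj.
  set (E := fun n : nat => match n with O => A | 1%nat => B | _ => fun _ => False end).
  assert (HE : forall n, meas PS (E n)) by (intros [|[|n]]; simpl; auto using meas_const).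
  assert (Hd : forall m n w, m <> n -> E m w -> E n w -> False)
    by (intros [|[|m]] [|[|n]] w Hmn; simpl; eauto; lia).
  pose proof (Pr_sigma_add PS E HE Hd) as Hsum.
  rewrite (Pr_equiv _ (fun w => A w \/ B w)) in Hsum.
  2: { intros w; split.
       - intros [[|[|n]] H]; simpl in H; tauto.
       - intros [H | H]; [exists O | exists 1%nat]; auto. }
  apply (uniqueness_sum _ _ _ Hsum).
  intros eps Heps; exists 1%nat; intros n Hn.
  assert (Hpartial : sum_f_R0 (fun n => Pr PS (E n)) n = Pr PS A + Pr PS B).
  { induction n as [|n IH]; [lia |].
    destruct n as [|n]; [reflexivity |].
    simpl sum_f_R0 in *; rewrite IH by lia; simpl; rewrite Pr_empty; ring. }
  unfold Rdist; rewrite Hpartial, Rminus_diag, Rabs_R0; exact Heps.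
Qed.

Lemma Pr_diff A B : meas PS A -> meas PS B -> (forall w, B w -> A w) ->
  Pr PS (fun w => A w /\ ~ B w) = Pr PS A - Pr PS B.
Proof.
  intros HA HB Hsub.
  rewrite (Pr_equiv A (fun w => B w \/ (A w /\ ~ B w))).
  - rewrite Pr_add; [ring | auto | apply meas_and, meas_compl; auto | tauto].
  - intros w; destruct (classic (B w)); intuition.
Qed.

Lemma Pr_mono A B : meas PS A -> meas PS B -> (forall w, A w -> B w) -> Pr PS A <= Pr PS B.
Proof.
  intros HA HB Hsub.
  pose proof (Pr_diff B A HB HA Hsub) as E.
  pose proof (Pr_nonneg PS _ (meas_and _ _ HB (meas_compl PS _ HA))); lra.
Qed.

Lemma Pr_compl A : meas PS A -> Pr PS (fun w => ~ A w) = 1 - Pr PS A.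
Proof.
  intros HA; rewrite <- (Pr_full PS), <- Pr_diff by (auto using meas_full).
  apply Pr_equiv; tauto.
Qed.

Lemma Pr_le_1 A : meas PS A -> Pr PS A <= 1.
Proof.
  intros HA; pose proof (Pr_compl A HA).
  pose proof (Pr_nonneg PS _ (meas_compl PS _ HA)); lra.
Qed.

Lemma Pr_list_union {I : Type} (E : I -> Omega PS -> Prop) (l : list I) :
  (forall i, meas PS (E i)) -> NoDup l ->
  (forall i j w, i <> j -> E i w -> E j w -> False) ->
  Pr PS (fun w => Exists (fun i => E i w) l) = fold_right Rplus 0 (map (fun i => Pr PS (E i)) l).
Proof.
  intros HE Hnd Hdisj; induction Hnd as [|i l Hi Hnd IH]; simpl.
  - rewrite <- Pr_empty; apply Pr_equiv; intros w; split; [inversion 1 | intros []].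
  - rewrite <- IH by auto; rewrite <- Pr_add.
    + apply Pr_equiv; intros w; rewrite Exists_cons; tauto.
    + apply HE.
    + apply meas_Exists, HE.
    + intros w Hw Hl; apply Exists_exists in Hl as [j [Hj Hjw]].
      apply (Hdisj i j w); auto; intros ->; auto.
Qed.

End ProbabilityBasics.

(* A countable dense family of reals: the fractions (a - b) / (c + 1) with a, b, c natural. *)
Definition grid (a b c : nat) : R := (INR a - INR b) / (INR c + 1).

Lemma IZR_as_INR_diff (z : Z) : IZR z = INR (Z.to_nat z) - INR (Z.to_nat (- z)).
Proof.
  destruct (Z_le_gt_dec 0 z).
  - replace (Z.to_nat (- z)) with O by lia; simpl.
    rewrite INR_IZR_INZ, Z2Nat.id by lia; ring.
  - replace (Z.to_nat z) with O by lia; simpl.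
    rewrite INR_IZR_INZ, Z2Nat.id, opp_IZR by lia; ring.
Qed.

Lemma grid_dense x y : x < y -> exists a b c, x < grid a b c < y.
Proof.
  intros Hxy.
  destruct (archimed_cor1 (y - x)) as [N [HN HN0]]; [lra |].
  assert (HNpos : 0 < INR N) by (apply lt_0_INR; lia).
  destruct (archimed (x * INR N)) as [Hup1 Hup2].
  set (z := up (x * INR N)) in *.
  exists (Z.to_nat z), (Z.to_nat (- z)), (N - 1)%nat; unfold grid.
  rewrite <- IZR_as_INR_diff.
  replace (INR (N - 1) + 1) with (INR N) by (rewrite minus_INR by lia; simpl; ring).
  apply Rmult_lt_compat_r with (r := INR N) in HN; [| exact HNpos].
  rewrite Rinv_l in HN by lra.
  split; apply Rmult_lt_reg_r with (INR N); auto;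
    unfold Rdiv; rewrite Rmult_assoc, Rinv_l; lra.
Qed.

Lemma Rbar_le_not_lt a b : Rbar_le a b <-> ~ Rbar_lt b a.
Proof. destruct a, b; simpl; split; intros; try lra; auto. Qed.

Section RandomVariables.
Variable PS : ProbSpace.
Implicit Types X Y : Omega PS -> Rbar.

(* {X < a} is the complement of the countable intersection of the events {X > a - 1/(n+1)}. *)
Lemma meas_lt_const X a : rv PS X -> meas PS (fun w => Rbar_lt (X w) (Fin a)).
Proof.
  intros HX.
  apply (meas_equiv PS (fun w => ~ forall n : nat, Rbar_lt (Fin (a - / (INR n + 1))) (X w))).
  2: { apply meas_compl, meas_all; intros n; apply HX. }
  intros w; destruct (X w) as [x |]; simpl; split.
  - intros H; apply not_all_ex_not in H as [n Hn].
    assert (0 < / (INR n + 1)) by (apply Rinv_0_lt_compat; pose proof (pos_INR n); lra).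
    lra.
  - intros H Hall.
    destruct (archimed_cor1 (a - x)) as [N [HN HN0]]; [lra |].
    specialize (Hall (N - 1)%nat); rewrite minus_INR in Hall by lia; simpl in Hall.
    replace (INR N - 1 + 1) with (INR N) in Hall by ring; lra.
  - intros H; exfalso; apply H; intros; exact I.
  - intros [].
Qed.

(* {X < Y} is the union over grid points q of {X < q} and {q < Y}. *)
Lemma meas_lt X Y : rv PS X -> rv PS Y -> meas PS (fun w => Rbar_lt (X w) (Y w)).
Proof.
  intros HX HY.
  apply (meas_equiv PS (fun w => exists a b c,
           Rbar_lt (X w) (Fin (grid a b c)) /\ Rbar_lt (Fin (grid a b c)) (Y w))).
  2: { do 3 (apply meas_union; intros); apply meas_and; [apply meas_lt_const |]; auto. }
  intros w; destruct (X w) as [x |], (Y w) as [y |]; simpl; split;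
    try solve [intros (a & b & c & H); simpl in H; tauto | tauto].
  - intros (a & b & c & H1 & H2); lra.
  - intros H; destruct (grid_dense x y H) as (a & b & c & Hq); exists a, b, c; lra.
  - intros _; destruct (grid_dense x (x + 1)) as (a & b & c & Hq); [lra |].
    exists a, b, c; split; [lra | exact I].
Qed.

Lemma meas_le X Y : rv PS X -> rv PS Y -> meas PS (fun w => Rbar_le (X w) (Y w)).
Proof.
  intros HX HY.
  apply (meas_equiv PS (fun w => ~ Rbar_lt (Y w) (X w))).
  - intros w; rewrite Rbar_le_not_lt; tauto.
  - apply meas_compl, meas_lt; auto.
Qed.

(* {X + Y > t} is the union over grid points q of {X > q} and {Y > t - q}. *)
Lemma rv_plus X Y : rv PS X -> rv PS Y -> rv PS (fun w => Rbar_plus (X w) (Y w)).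
Proof.
  intros HX HY t.
  apply (meas_equiv PS (fun w => exists a b c,
           Rbar_lt (Fin (grid a b c)) (X w) /\ Rbar_lt (Fin (t - grid a b c)) (Y w))).
  2: { do 3 (apply meas_union; intros); apply meas_and; auto. }
  intros w; destruct (X w) as [x |], (Y w) as [y |]; simpl; split; try tauto.
  - intros (a & b & c & H1 & H2); lra.
  - intros H; destruct (grid_dense (t - y) x) as (a & b & c & Hq); [lra |].
    exists a, b, c; lra.
  - intros _; destruct (grid_dense (x - 1) x) as (a & b & c & Hq); [lra |].
    exists a, b, c; split; [lra | exact I].
  - intros _; destruct (grid_dense (t - y) (t - y + 1)) as (a & b & c & Hq); [lra |].
    exists a, b, c; split; [exact I | lra].
  - intros _; exists O, O, O; split; exact I.
Qed.

Lemma rv_psum (F : nat -> Omega PS -> Rbar) k :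
  (forall j, rv PS (F j)) -> rv PS (fun w => Rbar_psum (fun j => F j w) k).
Proof.
  intros HF; induction k as [|k IH]; simpl.
  - intros t; apply meas_const.
  - apply rv_plus; auto.
Qed.

Lemma meas_tilde_gt (T Rs : nat -> Omega PS -> Rbar) t :
  (forall k, rv PS (T k)) -> (forall k, rv PS (Rs k)) -> meas PS (tilde_gt PS T Rs t).
Proof.
  intros HT HR; apply meas_union; intros k.
  apply meas_and; [apply meas_all; intros j; apply meas_impl, meas_lt; auto |].
  apply meas_and; [apply meas_le; auto |].
  apply rv_plus; [apply rv_psum |]; auto.
Qed.

(* A variable with tail G on [0, oo) a.s. exceeds every negative level. *)
Definition ext_tail (G : R -> R) (a : R) : R := if Rlt_dec a 0 then 1 else G a.

Lemma tail_ext X G : rv PS X -> has_tail PS X G ->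
  forall a, Pr PS (fun w => Rbar_lt (Fin a) (X w)) = ext_tail G a.
Proof.
  intros HX [Hneg Hpos] a; unfold ext_tail.
  destruct (Rlt_dec a 0) as [Ha | Ha]; [| apply Hpos; lra].
  apply Rle_antisym; [apply Pr_le_1, HX |].
  rewrite <- (Rminus_0_r 1), <- Hneg, <- Pr_compl by (apply meas_lt_const, HX).
  apply Pr_mono; [apply meas_compl, meas_lt_const, HX | apply HX |].
  intros w Hw; destruct (X w); simpl in *; auto; lra.
Qed.

End RandomVariables.

(* The half-open interval (itv_lo, itv_hi] of the extended line; itv_hi = None stands for +oo. *)
Record interval := Itv { itv_lo : R; itv_hi : option R }.

Definition in_itv (I : interval) (x : Rbar) : Prop :=
  Rbar_lt (Fin (itv_lo I)) x /\
  match itv_hi I with Some b => ~ Rbar_lt (Fin b) x | None => True end.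

(* The mass of I under the law with tail function G; taking the max makes it correct
   (namely 0) also for empty intervals. *)
Definition itv_mass (G : R -> R) (I : interval) : R :=
  G (itv_lo I) - match itv_hi I with Some b => G (Rmax (itv_lo I) b) | None => 0 end.

Lemma in_itv_split (a b : R) (x : Rbar) :
  Rbar_lt (Fin a) x /\ ~ Rbar_lt (Fin b) x <->
  Rbar_lt (Fin a) x /\ ~ Rbar_lt (Fin (Rmax a b)) x.
Proof.
  destruct x as [x |]; simpl; [| tauto].
  unfold Rmax; destruct (Rle_dec a b); split; intros []; split; auto; lra.
Qed.

Section Independence.
Variable PS : ProbSpace.
Variable I : Type.
Hypothesis I_eq_dec : forall i j : I, {i = j} + {i <> j}.
Variable X : I -> Omega PS -> Rbar.
Hypothesis X_rv : forall i, rv PS (X i).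
Hypothesis X_indep : indep PS X.

Definition tail_of (i : I) (a : R) : R := Pr PS (fun w => Rbar_lt (Fin a) (X i w)).

Definition above (L : list I) (th : I -> R) (w : Omega PS) : Prop :=
  Forall (fun i => Rbar_lt (Fin (th i)) (X i w)) L.

Definition within (M : list I) (J : I -> interval) (w : Omega PS) : Prop :=
  Forall (fun i => in_itv (J i) (X i w)) M.

Lemma meas_above L th : meas PS (above L th).
Proof. apply (meas_Forall PS (fun i w => Rbar_lt (Fin (th i)) (X i w))); intros i; apply X_rv. Qed.

Lemma meas_within M J : meas PS (within M J).
Proof.
  apply (meas_Forall PS (fun i w => in_itv (J i) (X i w))); intros i.
  apply meas_and; [apply X_rv |].
  destruct (itv_hi (J i)); [apply meas_compl, X_rv | apply meas_full].
Qed.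

Definition update (th : I -> R) (i : I) (a : R) : I -> R :=
  fun j => if I_eq_dec j i then a else th j.

Lemma update_agree th i a j : j <> i -> update th i a j = th j.
Proof. intros Hji; unfold update; destruct (I_eq_dec j i); tauto. Qed.

Lemma update_self th i a : update th i a i = a.
Proof. unfold update; destruct (I_eq_dec i i); tauto. Qed.

Lemma above_update L th i a w : ~ In i L ->
  (above (i :: L) (update th i a) w <-> Rbar_lt (Fin a) (X i w) /\ above L th w).
Proof.
  intros HiL; unfold above; rewrite Forall_cons_iff, update_self, !Forall_forall.
  assert (Hagree : forall j, In j L -> update th i a j = th j)
    by (intros j Hj; apply update_agree; intros ->; tauto).
  split; intros [Hi HL]; split; auto; intros j Hj;
    [rewrite <- Hagree | rewrite Hagree]; auto.
Qed.

Lemma prod_update L th i a : ~ In i L ->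
  fold_right Rmult 1 (map (fun j => tail_of j (update th i a j)) (i :: L)) =
  tail_of i a * fold_right Rmult 1 (map (fun j => tail_of j (th j)) L).
Proof.
  intros HiL; simpl; rewrite update_self; f_equal; f_equal.
  apply map_ext_in; intros j Hj; rewrite update_agree; auto; intros ->; tauto.
Qed.

(* Independence, stated on the events {X_i > a}, extends to intervals: peel off the upper
   constraints one at a time, each time splitting an event as a difference of two events
   that only carry lower constraints on the peeled variable. *)
Lemma above_within_prob : forall M L th J, NoDup (L ++ M) ->
  Pr PS (fun w => above L th w /\ within M J w) =
  fold_right Rmult 1 (map (fun i => tail_of i (th i)) L) *
  fold_right Rmult 1 (map (fun i => itv_mass (tail_of i) (J i)) M).
Proof.
  induction M as [|i M IH]; intros L th J Hnd.
  - simpl; rewrite Rmult_1_r, app_nil_r in *.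
    rewrite (Pr_equiv PS _ (above L th)) by (intros w; unfold within; intuition).
    apply X_indep, Hnd.
  - assert (HiLM : ~ In i (L ++ M)) by (eapply NoDup_remove_2; eauto).
    assert (Hnd' : NoDup ((i :: L) ++ M)) by (constructor; [| eapply NoDup_remove_1]; eauto).
    assert (HiL : ~ In i L) by (intros H; apply HiLM, in_or_app; auto).
    assert (Hlower : forall a,
      Pr PS (fun w => above L th w /\ Rbar_lt (Fin a) (X i w) /\ within M J w) =
      tail_of i a * fold_right Rmult 1 (map (fun i => tail_of i (th i)) L) *
      fold_right Rmult 1 (map (fun i => itv_mass (tail_of i) (J i)) M)).
    { intros a.
      rewrite (Pr_equiv PS _ (fun w => above (i :: L) (update th i a) w /\ within M J w))
        by (intros w; rewrite above_update by exact HiL; tauto).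
      rewrite IH, prod_update by assumption; reflexivity. }
    simpl; destruct (J i) as [a [b |]] eqn:EJ.
    + rewrite (Pr_equiv PS _ (fun w =>
          (above L th w /\ Rbar_lt (Fin a) (X i w) /\ within M J w) /\
          ~ (above L th w /\ Rbar_lt (Fin (Rmax a b)) (X i w) /\ within M J w))).
      * rewrite Pr_diff, !Hlower.
        -- change (itv_mass (tail_of i) (Itv a (Some b)))
             with (tail_of i a - tail_of i (Rmax a b)); ring.
        -- apply meas_and; [apply meas_above | apply meas_and; [apply X_rv | apply meas_within]].
        -- apply meas_and; [apply meas_above | apply meas_and; [apply X_rv | apply meas_within]].
        -- intros w (HL & Hi & HM); repeat split; auto.
           destruct (X i w); simpl in *; auto; pose proof (Rmax_l a b); lra.
      * intros w; unfold within at 1; rewrite Forall_cons_iff, EJ; unfold in_itv; simpl.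
        pose proof (in_itv_split a b (X i w)); tauto.
    + rewrite (Pr_equiv PS _ (fun w => above L th w /\ Rbar_lt (Fin a) (X i w) /\ within M J w)).
      * rewrite Hlower; change (itv_mass (tail_of i) (Itv a None)) with (tail_of i a - 0); ring.
      * intros w; unfold within at 1; rewrite Forall_cons_iff, EJ; unfold in_itv; simpl; tauto.
Qed.

Lemma within_prob M J : NoDup M ->
  Pr PS (within M J) = fold_right Rmult 1 (map (fun i => itv_mass (tail_of i) (J i)) M).
Proof.
  intros Hnd.
  rewrite (Pr_equiv PS _ (fun w => above nil (fun _ => 0) w /\ within M J w))
    by (intros w; unfold above; intuition).
  rewrite above_within_prob by exact Hnd; simpl; ring.
Qed.

End Independence.

(* A scenario prescribes, for each of its rounds j, an interval for T_j and one for R_j. *)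
Definition round : Type := (interval * interval)%type.
Definition default_round : round := (Itv 0 None, Itv 0 None).

Definition in_round (r : round) (t x : Rbar) : Prop := in_itv (fst r) t /\ in_itv (snd r) x.

Definition round_mass (GT GR : R -> R) (r : round) : R :=
  itv_mass (ext_tail GT) (fst r) * itv_mass (ext_tail GR) (snd r).

Definition round_indices (n : nat) : list (nat + nat) :=
  flat_map (fun j => [inl j; inr j]) (seq 0 n).

Lemma round_indices_S n : round_indices (S n) = round_indices n ++ [inl n; inr n].
Proof. unfold round_indices; rewrite seq_S, flat_map_app; reflexivity. Qed.

Lemma in_round_indices i n :
  In i (round_indices n) <-> match i with inl j | inr j => (j < n)%nat end.
Proof.
  unfold round_indices; rewrite in_flat_map; split.
  - intros [j [Hj Hi]]; apply in_seq in Hj; simpl in Hi.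
    destruct Hi as [<- | [<- | []]]; lia.
  - destruct i as [j | j]; intros Hj; exists j; rewrite in_seq; simpl; split; auto; lia.
Qed.

Lemma NoDup_round_indices n : NoDup (round_indices n).
Proof.
  induction n as [|n IH]; [constructor |].
  rewrite round_indices_S; apply NoDup_app; auto.
  - repeat constructor; simpl; intuition discriminate.
  - intros x Hx Hx'; apply in_round_indices in Hx; simpl in Hx'.
    destruct Hx' as [<- | [<- | []]]; lia.
Qed.

Lemma fold_Rmult_app (l1 l2 : list R) :
  fold_right Rmult 1 (l1 ++ l2) = fold_right Rmult 1 l1 * fold_right Rmult 1 l2.
Proof. induction l1 as [|x l1 IH]; simpl; [ring | rewrite IH; ring]. Qed.

Lemma prod_round_indices (F : nat + nat -> R) n :
  fold_right Rmult 1 (map F (round_indices n)) =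
  fold_right Rmult 1 (map (fun j => F (inl j) * F (inr j)) (seq 0 n)).
Proof.
  induction n as [|n IH]; [reflexivity |].
  rewrite round_indices_S, seq_S, !map_app, !fold_Rmult_app, IH; simpl; ring.
Qed.

Lemma map_nth_seq {A B : Type} (g : A -> B) (l : list A) (d : A) :
  map (fun j => g (nth j l d)) (seq 0 (length l)) = map g l.
Proof.
  induction l as [|x l IH]; simpl; [reflexivity |].
  rewrite <- seq_shift, map_map; simpl; rewrite IH; reflexivity.
Qed.

Lemma itv_mass_ext (G G' : R -> R) (I : interval) :
  (forall a, G a = G' a) -> itv_mass G I = itv_mass G' I.
Proof. intros H; unfold itv_mass; destruct (itv_hi I); rewrite !H; reflexivity. Qed.

Definition index_eq_dec (i j : nat + nat) : {i = j} + {i <> j}.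
Proof. decide equality; apply Nat.eq_dec. Defined.

Definition reset_family {PS : ProbSpace} (T Rs : nat -> Omega PS -> Rbar)
  : nat + nat -> Omega PS -> Rbar :=
  fun i => match i with inl k => T k | inr k => Rs k end.

Section Scenarios.
Variable PS : ProbSpace.
Variables T Rs : nat -> Omega PS -> Rbar.

Definition scenario_event (s : list round) (w : Omega PS) : Prop :=
  forall j, (j < length s)%nat -> in_round (nth j s default_round) (T j w) (Rs j w).

Definition scenario_itv (s : list round) (i : nat + nat) : interval :=
  match i with
  | inl j => fst (nth j s default_round)
  | inr j => snd (nth j s default_round)
  end.

Lemma scenario_event_within s w :
  scenario_event s w <->
  within PS (nat + nat) (reset_family T Rs) (round_indices (length s)) (scenario_itv s) w.
Proof.
  unfold scenario_event, in_round, within; rewrite Forall_forall; split.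
  - intros H i Hi; apply in_round_indices in Hi.
    destruct i as [j | j]; apply (H j Hi).
  - intros H j Hj; split;
      [apply (H (inl j)) | apply (H (inr j))]; apply in_round_indices; exact Hj.
Qed.

Lemma meas_scenario_event s :
  (forall k, rv PS (T k)) -> (forall k, rv PS (Rs k)) -> meas PS (scenario_event s).
Proof.
  intros HT HR.
  apply (meas_equiv PS _ _ (fun w => iff_sym (scenario_event_within s w))).
  apply meas_within; intros [k | k]; simpl; auto.
Qed.

Lemma scenario_prob GT GR s : reset_setup PS T Rs GT GR ->
  Pr PS (scenario_event s) = fold_right Rmult 1 (map (round_mass GT GR) s).
Proof.
  intros (HT & HR & HtT & HtR & Hind).
  assert (Hrv : forall i, rv PS (reset_family T Rs i)) by (intros [k | k]; simpl; auto).
  rewrite (Pr_equiv PS _ _ (scenario_event_within s)).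
  rewrite (within_prob PS _ index_eq_dec _ Hrv Hind) by apply NoDup_round_indices.
  rewrite prod_round_indices, <- (map_nth_seq _ s default_round).
  f_equal; apply map_ext; intros j; unfold round_mass; simpl.
  f_equal; apply itv_mass_ext; intros a; apply tail_ext; auto; [apply HtT | apply HtR].
Qed.

End Scenarios.

Fixpoint partial_sum (c : nat -> R) (m : nat) : R :=
  match m with O => 0 | S k => partial_sum c k + c k end.

Lemma partial_sum_mono c k m :
  (forall j, (j < m)%nat -> 0 <= c j) -> (k <= m)%nat -> partial_sum c k <= partial_sum c m.
Proof.
  intros Hc Hkm; induction Hkm as [|m Hkm IH]; simpl; [lra |].
  assert (0 <= c m) by (apply Hc; lia).
  assert (partial_sum c k <= partial_sum c m) by (apply IH; intros; apply Hc; lia).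
  lra.
Qed.

Lemma partial_sum_const (a : R) k : partial_sum (fun _ => a) k = a * INR k.
Proof. induction k as [|k IH]; simpl partial_sum; [simpl; ring | rewrite IH, S_INR; ring]. Qed.

Section TildeBounds.
Variable PS : ProbSpace.
Variables T Rs : nat -> Omega PS -> Rbar.
Variable w : Omega PS.

Lemma psum_between k (lo hi : nat -> R) :
  (forall j, (j < k)%nat -> in_itv (Itv (lo j) (Some (hi j))) (Rs j w)) ->
  exists s, Rbar_psum (fun j => Rs j w) k = Fin s /\
            partial_sum lo k <= s <= partial_sum hi k.
Proof.
  intros H; induction k as [|k IH]; [exists 0; simpl; split; [auto | lra] |].
  destruct IH as [s [Es Hs]]; [intros j Hj; apply H; lia |].
  destruct (H k (Nat.lt_succ_diag_r k)) as [Hlo Hhi]; simpl in Hhi.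
  destruct (Rs k w) as [r |] eqn:Er; simpl in Hlo, Hhi; [| tauto].
  exists (s + r); simpl; rewrite Es, Er; simpl; split; [reflexivity | lra].
Qed.

(* If the resets of the first m rounds last at most c_j and round m is a success
   (T_m <= R_m) of duration at most d, then Ttilde <= c_0 + ... + c_(m-1) + d:
   the process stops at round m at the latest, and earlier stops are even shorter. *)
Lemma not_tilde_gt m (lo c : nat -> R) d t :
  (forall j, (j < m)%nat -> in_itv (Itv (lo j) (Some (c j))) (Rs j w)) ->
  (forall j, (j < m)%nat -> 0 <= c j) -> 0 <= d ->
  Rbar_le (T m w) (Rs m w) -> Rbar_le (T m w) (Fin d) ->
  partial_sum c m + d <= t -> ~ tilde_gt PS T Rs t w.
Proof.
  intros Hr Hc Hd HTR HTd Hsum [k [Hres [Hstop Hgt]]].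
  destruct (Nat.lt_total k m) as [Hlt | [-> | Hgt']].
  - destruct (psum_between k lo c) as [s [Es [_ Hs]]]; [intros j Hj; apply Hr; lia |].
    destruct (Hr k Hlt) as [_ Hck]; simpl in Hck.
    assert (Hmono : partial_sum c (S k) <= partial_sum c m) by (apply partial_sum_mono; auto).
    rewrite Es in Hgt; simpl in Hmono.
    destruct (T k w) as [x |], (Rs k w) as [r |]; simpl in *; tauto || lra.
  - destruct (psum_between m lo c) as [s [Es [_ Hs]]]; [exact Hr |].
    rewrite Es in Hgt; destruct (T m w) as [x |]; simpl in *; [lra | tauto].
  - apply Rbar_le_not_lt in HTR; apply HTR, Hres, Hgt'.
Qed.

Lemma tilde_gt_intro k (lo hi : nat -> R) a t :
  (forall j, (j < k)%nat -> Rbar_lt (Rs j w) (T j w)) ->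
  (forall j, (j < k)%nat -> in_itv (Itv (lo j) (Some (hi j))) (Rs j w)) ->
  Rbar_le (T k w) (Rs k w) -> Rbar_lt (Fin a) (T k w) ->
  t <= partial_sum lo k + a -> tilde_gt PS T Rs t w.
Proof.
  intros Hres Hr Hstop Ha Ht.
  destruct (psum_between k lo hi Hr) as [s [Es [Hs _]]].
  exists k; repeat split; auto.
  rewrite Es; destruct (T k w) as [x |]; simpl in *; [lra | exact I].
Qed.

End TildeBounds.

(* The event {Ttilde <= t} contains the
   disjoint events "the process follows plan p" for every plan p of cost at most t, where a
   plan is a sequence of resets, each occurring inside a prescribed window, ended by a
   success inside a prescribed window; summing their probabilities bounds P(Ttilde > t). *)

Inductive reset_move := Reset_half | Reset_one | Reset_three_halves.
Inductive hit_move := Hit_zero | Hit_one | Hit_three_halves.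
Definition move : Type := (reset_move + hit_move)%type.

Definition reset_round (r : reset_move) : round :=
  match r with
  | Reset_half => (Itv 0 None, Itv 0 (Some (1/2)))
  | Reset_one => (Itv 0 None, Itv (1/2) (Some 1))
  | Reset_three_halves => (Itv 1 None, Itv 1 (Some (3/2)))
  end.

Definition hit_round (h : hit_move) : round :=
  match h with
  | Hit_zero => (Itv (-1) (Some 0), Itv 0 None)
  | Hit_one => (Itv 0 (Some 1), Itv 1 None)
  | Hit_three_halves => (Itv 1 (Some (3/2)), Itv (3/2) None)
  end.

Definition move_round (m : move) : round :=
  match m with inl r => reset_round r | inr h => hit_round h end.

(* The time spent in a round of each kind is at most its cost. *)
Definition reset_cost (r : reset_move) : R :=
  match r with Reset_half => 1/2 | Reset_one => 1 | Reset_three_halves => 3/2 end.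
Definition hit_cost (h : hit_move) : R :=
  match h with Hit_zero => 0 | Hit_one => 1 | Hit_three_halves => 3/2 end.

Lemma reset_round_window r :
  snd (reset_round r) = Itv (itv_lo (snd (reset_round r))) (Some (reset_cost r)).
Proof. destruct r; reflexivity. Qed.

Lemma hit_round_bound h t x :
  in_round (hit_round h) t x -> Rbar_le t x /\ Rbar_le t (Fin (hit_cost h)).
Proof. destruct h, t, x; unfold in_round, in_itv; simpl; lra. Qed.

Lemma move_rounds_disjoint (m1 m2 : move) t x :
  m1 <> m2 -> in_round (move_round m1) t x -> in_round (move_round m2) t x -> False.
Proof.
  intros Hne; destruct m1 as [[] | []], m2 as [[] | []]; try congruence;
    destruct t, x; unfold in_round, in_itv; simpl; lra.
Qed.

Definition plan : Type := (list reset_move * hit_move)%type.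
Definition plan_moves (p : plan) : list move := map inl (fst p) ++ [inr (snd p)].
Definition plan_rounds (p : plan) : list round := map move_round (plan_moves p).
Definition plan_cost (p : plan) : R :=
  partial_sum (fun j => reset_cost (nth j (fst p) Reset_half)) (length (fst p)) + hit_cost (snd p).

Lemma length_plan_moves p : length (plan_moves p) = S (length (fst p)).
Proof. unfold plan_moves; rewrite length_app, length_map; simpl; lia. Qed.

Lemma length_plan_rounds p : length (plan_rounds p) = length (plan_moves p).
Proof. apply length_map. Qed.

Lemma nth_plan_rounds p j : (j < length (plan_moves p))%nat ->
  nth j (plan_rounds p) default_round = move_round (nth j (plan_moves p) (inr Hit_zero)).
Proof.
  intros Hj; unfold plan_rounds.
  rewrite (nth_indep _ _ (move_round (inr Hit_zero))) by (rewrite length_map; exact Hj).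
  apply map_nth.
Qed.

Lemma nth_plan_moves_reset rs h j : (j < length rs)%nat ->
  nth j (plan_moves (rs, h)) (inr Hit_zero) = inl (nth j rs Reset_half).
Proof.
  intros Hj; unfold plan_moves; simpl fst; rewrite app_nth1 by (rewrite length_map; exact Hj).
  rewrite (nth_indep _ _ (inl Reset_half)) by (rewrite length_map; exact Hj).
  apply map_nth.
Qed.

Lemma nth_plan_moves_hit rs h : nth (length rs) (plan_moves (rs, h)) (inr Hit_zero) = inr h.
Proof.
  unfold plan_moves; simpl fst; simpl snd.
  rewrite app_nth2; rewrite length_map; [| lia].
  rewrite Nat.sub_diag; reflexivity.
Qed.

Lemma plans_differ (p1 p2 : plan) : p1 <> p2 ->
  exists j, (j < length (plan_moves p1))%nat /\ (j < length (plan_moves p2))%nat /\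
            nth j (plan_moves p1) (inr Hit_zero) <> nth j (plan_moves p2) (inr Hit_zero).
Proof.
  destruct p1 as [rs1 h1], p2 as [rs2 h2]; unfold plan_moves; simpl.
  revert rs2; induction rs1 as [|r1 rs1 IH]; intros [|r2 rs2] Hne; simpl.
  - exists O; simpl; repeat split; try lia; congruence.
  - exists O; simpl; repeat split; try lia; discriminate.
  - exists O; simpl; repeat split; try lia; discriminate.
  - destruct (classic (r1 = r2)) as [<- | Hr].
    + destruct (IH rs2) as [j (Hj1 & Hj2 & Hj)]; [congruence |].
      exists (S j); simpl; repeat split; auto; lia.
    + exists O; simpl; repeat split; try lia; congruence.
Qed.

(* With x = exp(-mu/2), the probability of each window when T has tail Tbar and R ~ Exp(mu). *)
Definition move_weight (x : R) (m : move) : R :=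
  match m with
  | inl Reset_half => 1/2 * (1 - x)
  | inl Reset_one => 1/2 * (x - x * x)
  | inl Reset_three_halves => 1/4 * (x * x - x * x * x)
  | inr Hit_zero => 1/2
  | inr Hit_one => 1/4 * (x * x)
  | inr Hit_three_halves => 1/12 * (x * x * x)
  end.

Definition plan_weight (x : R) (p : plan) : R :=
  fold_right Rmult 1 (map (move_weight x) (plan_moves p)).

(* exp_tail mu takes the values 1, x, x^2, x^3 at 0, 1/2, 1, 3/2. *)
Lemma move_mass mu m :
  round_mass Tbar (exp_tail mu) (move_round m) = move_weight (exp (- mu / 2)) m.
Proof.
  set (x := exp (- mu / 2)).
  assert (E0 : exp_tail mu 0 = 1) by (unfold exp_tail; rewrite Rmult_0_r; apply exp_0).
  assert (E1 : exp_tail mu (1/2) = x) by (unfold exp_tail, x; f_equal; field).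
  assert (E2 : exp_tail mu 1 = x * x) by (unfold exp_tail, x; rewrite <- exp_plus; f_equal; field).
  assert (E3 : exp_tail mu (3/2) = x * x * x)
    by (unfold exp_tail, x; rewrite <- !exp_plus; f_equal; field).
  destruct m as [[] | []]; unfold round_mass, itv_mass, ext_tail, Tbar, Rmax; simpl;
    repeat (destruct Rle_dec; try lra); repeat (destruct Rlt_dec; try lra);
    rewrite ?E0, ?E1, ?E2, ?E3; simpl; field.
Qed.

Definition plans_cost_0 : list plan := [([], Hit_zero)].
Definition plans_cost_1 : list plan :=
  plans_cost_0 ++ [([], Hit_one); ([Reset_half], Hit_zero); ([Reset_one], Hit_zero);
                   ([Reset_half; Reset_half], Hit_zero)].
Definition plans_cost_3half : list plan :=
  plans_cost_1 ++ [([], Hit_three_halves); ([Reset_half], Hit_one);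
                   ([Reset_three_halves], Hit_zero); ([Reset_half; Reset_one], Hit_zero);
                   ([Reset_one; Reset_half], Hit_zero);
                   ([Reset_half; Reset_half; Reset_half], Hit_zero)].

Lemma plans_cost_0_valid : NoDup plans_cost_0 /\ Forall (fun p => plan_cost p <= 0) plans_cost_0.
Proof.
  split.
  - repeat constructor; simpl; intuition discriminate.
  - repeat constructor; unfold plan_cost; simpl; lra.
Qed.

Lemma plans_cost_1_valid : NoDup plans_cost_1 /\ Forall (fun p => plan_cost p <= 1) plans_cost_1.
Proof.
  split.
  - repeat constructor; simpl; intuition discriminate.
  - repeat constructor; unfold plan_cost; simpl; lra.
Qed.

Lemma plans_cost_3half_valid :
  NoDup plans_cost_3half /\ Forall (fun p => plan_cost p <= 3/2) plans_cost_3half.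
Proof.
  split.
  - repeat constructor; simpl; intuition discriminate.
  - repeat constructor; unfold plan_cost; simpl; lra.
Qed.

Section ExponentialResets.
Variable PS : ProbSpace.
Variables T Rs : nat -> Omega PS -> Rbar.

Definition plan_event (p : plan) : Omega PS -> Prop := scenario_event PS T Rs (plan_rounds p).

Lemma plan_events_disjoint p1 p2 w : p1 <> p2 -> plan_event p1 w -> plan_event p2 w -> False.
Proof.
  intros Hne H1 H2; destruct (plans_differ p1 p2 Hne) as [j (Hj1 & Hj2 & Hj)].
  unfold plan_event, scenario_event in *; rewrite length_plan_rounds in H1, H2.
  specialize (H1 j Hj1); specialize (H2 j Hj2).
  rewrite nth_plan_rounds in H1, H2 by assumption.
  exact (move_rounds_disjoint _ _ (T j w) (Rs j w) Hj H1 H2).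
Qed.

Lemma plan_event_not_tilde_gt p t w :
  plan_cost p <= t -> plan_event p w -> ~ tilde_gt PS T Rs t w.
Proof.
  intros Hcost Hp; destruct p as [rs h].
  unfold plan_event, scenario_event in Hp.
  rewrite length_plan_rounds, length_plan_moves in Hp; simpl fst in Hp.
  assert (Hround : forall j, (j <= length rs)%nat ->
            in_round (nth j (plan_rounds (rs, h)) default_round) (T j w) (Rs j w)).
  { intros j Hj; apply Hp; lia. }
  assert (Hhit := Hround (length rs) (Nat.le_refl _)).
  rewrite nth_plan_rounds, nth_plan_moves_hit in Hhit by (rewrite length_plan_moves; simpl; lia).
  apply hit_round_bound in Hhit as [HTR HTd].
  apply (not_tilde_gt PS T Rs w (length rs)
           (fun j => itv_lo (snd (reset_round (nth j rs Reset_half))))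
           (fun j => reset_cost (nth j rs Reset_half)) (hit_cost h)); auto.
  - intros j Hj; rewrite <- reset_round_window.
    specialize (Hround j (Nat.lt_le_incl _ _ Hj)).
    rewrite nth_plan_rounds, nth_plan_moves_reset in Hround
      by (try rewrite length_plan_moves; simpl; lia).
    apply Hround.
  - intros j _; destruct (nth j rs Reset_half); simpl; lra.
  - destruct h; simpl; lra.
Qed.

Lemma tilde_tail_bound (plans : list plan) t :
  (forall k, rv PS (T k)) -> (forall k, rv PS (Rs k)) ->
  NoDup plans -> Forall (fun p => plan_cost p <= t) plans ->
  Pr PS (tilde_gt PS T Rs t) <= 1 - fold_right Rplus 0 (map (fun p => Pr PS (plan_event p)) plans).
Proof.
  intros HT HR Hnd Hcost.
  assert (Hmeas : forall p, meas PS (plan_event p)) by (intros p; apply meas_scenario_event; auto).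
  rewrite <- (Pr_list_union PS plan_event plans Hmeas Hnd)
    by (intros p1 p2 w; apply plan_events_disjoint).
  assert (Hunion : meas PS (fun w => Exists (fun p => plan_event p w) plans))
    by (apply meas_Exists; auto).
  assert (Hdisj : forall w,
            tilde_gt PS T Rs t w -> Exists (fun p => plan_event p w) plans -> False).
  { intros w Hgt Hex; apply Exists_exists in Hex as [p [Hp Hpw]].
    rewrite Forall_forall in Hcost; exact (plan_event_not_tilde_gt p t w (Hcost p Hp) Hpw Hgt). }
  pose proof (Pr_add PS _ _ (meas_tilde_gt PS T Rs t HT HR) Hunion Hdisj) as Hadd.
  pose proof (Pr_le_1 PS _ (meas_or PS _ _ (meas_tilde_gt PS T Rs t HT HR) Hunion)).
  lra.
Qed.

Lemma plan_prob mu p : reset_setup PS T Rs Tbar (exp_tail mu) ->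
  Pr PS (plan_event p) = plan_weight (exp (- mu / 2)) p.
Proof.
  intros Hset; unfold plan_event, plan_rounds, plan_weight.
  rewrite (scenario_prob PS T Rs _ _ _ Hset), map_map.
  f_equal; apply map_ext, move_mass.
Qed.

Lemma plans_bound mu plans c t : reset_setup PS T Rs Tbar (exp_tail mu) ->
  NoDup plans -> Forall (fun p => plan_cost p <= c) plans -> c <= t ->
  Pr PS (tilde_gt PS T Rs t) <=
  1 - fold_right Rplus 0 (map (plan_weight (exp (- mu / 2))) plans).
Proof.
  intros Hset Hnd Hcost Hct.
  erewrite <- map_ext by (intros p; apply (plan_prob mu p Hset)).
  destruct Hset as (HT & HR & _).
  apply tilde_tail_bound; auto.
  eapply Forall_impl; [| exact Hcost]; intros p Hp; simpl in Hp; lra.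
Qed.

(* Part one of the theorem: for t < 1, 1 <= t < 3/2 and t >= 3/2 the plans of cost
   0, 1 and 3/2 already have total probability at least 1/2, 3/4 and 5/6. *)
Theorem exp_resets_st_le mu : 0 < mu ->
  reset_setup PS T Rs Tbar (exp_tail mu) -> tilde_st_le PS T Rs Tbar.
Proof.
  intros Hmu Hset t Ht.
  assert (Hx0 : 0 < exp (- mu / 2)) by apply exp_pos.
  assert (Hx1 : exp (- mu / 2) < 1) by (rewrite <- exp_0; apply exp_increasing; lra).
  set (x := exp (- mu / 2)) in *.
  unfold Tbar; destruct (Rlt_dec t 1); [| destruct (Rlt_dec t (3/2))].
  - destruct plans_cost_0_valid as [Hnd Hc].
    pose proof (plans_bound mu _ 0 t Hset Hnd Hc Ht) as H; unfold plan_weight in H; simpl in H; lra.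
  - destruct plans_cost_1_valid as [Hnd Hc].
    pose proof (plans_bound mu _ 1 t Hset Hnd Hc ltac:(lra)) as H; unfold plan_weight in H; simpl in H; fold x in H.
    nra.
  - destruct plans_cost_3half_valid as [Hnd Hc].
    pose proof (plans_bound mu _ (3/2) t Hset Hnd Hc ltac:(lra)) as H; unfold plan_weight in H; simpl in H; fold x in H.
    assert (0 <= (1 - x) * (1 - x) * (5 + x)) by (apply Rmult_le_pos; nra).
    nra.
Qed.

End ExponentialResets.

(* With probability
   2^-(k+1) the first k rounds have T_j >= 1, hence are cut at 9/10, and then T_k = 0; this
   gives Ttilde = 9k/10, and the cases k = 2, 3 already put mass 3/16 > 1/6 = Tbar(3/2)
   beyond 3/2. *)
Definition stall_round : round := (Itv (9/10) None, Itv (4/5) (Some (9/10))).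
Definition quick_hit_round : round := (Itv (-1/10) (Some 0), Itv 0 None).
Definition stalls (k : nat) : list round := repeat stall_round k ++ [quick_hit_round].

Lemma length_stalls k : length (stalls k) = S k.
Proof. unfold stalls; rewrite length_app, repeat_length; simpl; lia. Qed.

Lemma nth_stalls_stall k j : (j < k)%nat -> nth j (stalls k) default_round = stall_round.
Proof.
  intros Hj; unfold stalls; rewrite app_nth1 by (rewrite repeat_length; exact Hj).
  apply nth_repeat_lt, Hj.
Qed.

Lemma nth_stalls_hit k : nth k (stalls k) default_round = quick_hit_round.
Proof.
  unfold stalls; rewrite app_nth2 by (rewrite repeat_length; lia).
  rewrite repeat_length, Nat.sub_diag; reflexivity.
Qed.

Section DiracReset.
Variable PS : ProbSpace.
Variables T Rs : nat -> Omega PS -> Rbar.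

Lemma stalls_prob k : reset_setup PS T Rs Tbar (dirac_tail (9/10)) ->
  Pr PS (scenario_event PS T Rs (stalls k)) = (1/2) ^ (S k).
Proof.
  intros Hset; rewrite (scenario_prob PS T Rs _ _ _ Hset).
  assert (Hstall : round_mass Tbar (dirac_tail (9/10)) stall_round = 1/2).
  { unfold round_mass, itv_mass, ext_tail, Tbar, dirac_tail, Rmax; simpl.
    repeat (destruct Rle_dec; try lra); repeat (destruct Rlt_dec; try lra). }
  assert (Hhit : round_mass Tbar (dirac_tail (9/10)) quick_hit_round = 1/2).
  { unfold round_mass, itv_mass, ext_tail, Tbar, dirac_tail, Rmax; simpl.
    repeat (destruct Rle_dec; try lra); repeat (destruct Rlt_dec; try lra). }
  assert (Hpow : forall n, fold_right Rmult 1 (repeat (1/2) n) = (1/2) ^ n)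
    by (induction n as [|n IH]; simpl; [reflexivity | rewrite IH; reflexivity]).
  unfold stalls; rewrite map_app, fold_Rmult_app, map_repeat, Hstall, Hpow; simpl.
  rewrite Hhit; ring.
Qed.

Lemma stalls_tilde_gt k t w : t <= 4/5 * INR k - 1/10 ->
  scenario_event PS T Rs (stalls k) w -> tilde_gt PS T Rs t w.
Proof.
  intros Ht Hs; unfold scenario_event in Hs; rewrite length_stalls in Hs.
  assert (Hstall : forall j, (j < k)%nat -> in_round stall_round (T j w) (Rs j w)).
  { intros j Hj; rewrite <- (nth_stalls_stall k j Hj); apply Hs; lia. }
  assert (Hhit : in_round quick_hit_round (T k w) (Rs k w)).
  { rewrite <- (nth_stalls_hit k); apply Hs; lia. }
  apply (tilde_gt_intro PS T Rs w k (fun _ => 4/5) (fun _ => 9/10) (-1/10)).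
  - intros j Hj; destruct (Hstall j Hj) as [HT HR]; unfold in_itv in *; simpl in *.
    destruct (T j w), (Rs j w); simpl in *; tauto || lra.
  - intros j Hj; apply Hstall, Hj.
  - destruct Hhit as [HT HR]; unfold in_itv in *; simpl in *.
    destruct (T k w), (Rs k w); simpl in *; tauto || lra.
  - apply Hhit.
  - rewrite partial_sum_const; lra.
Qed.

Lemma stalls_2_3_disjoint w :
  scenario_event PS T Rs (stalls 2) w -> scenario_event PS T Rs (stalls 3) w -> False.
Proof.
  intros H2 H3.
  destruct (H2 2%nat ltac:(rewrite length_stalls; lia)) as [HT2 _].
  destruct (H3 2%nat ltac:(rewrite length_stalls; lia)) as [HT3 _].
  rewrite nth_stalls_hit in HT2; rewrite nth_stalls_stall in HT3 by lia.
  unfold in_itv in *; simpl in *; destruct (T 2%nat w); simpl in *; lra.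
Qed.

Theorem dirac_reset_not_st_le : reset_setup PS T Rs Tbar (dirac_tail (9/10)) ->
  ~ tilde_st_le PS T Rs Tbar.
Proof.
  intros Hset Hle.
  pose proof Hset as (HT & HR & _).
  assert (Hmeas : forall k, meas PS (scenario_event PS T Rs (stalls k)))
    by (intros k; apply meas_scenario_event; auto).
  assert (Hlow : Pr PS (fun w => scenario_event PS T Rs (stalls 2) w \/
                                 scenario_event PS T Rs (stalls 3) w)
                 <= Pr PS (tilde_gt PS T Rs (3/2))).
  { apply Pr_mono; [apply meas_or; auto | apply meas_tilde_gt; auto |].
    intros w [Hw | Hw]; eapply stalls_tilde_gt; eauto; simpl; lra. }
  rewrite Pr_add in Hlow; [| apply Hmeas | apply Hmeas | apply stalls_2_3_disjoint].
  rewrite !(stalls_prob _ Hset) in Hlow.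
  specialize (Hle (3/2) ltac:(lra)).
  unfold Tbar in Hle; destruct (Rlt_dec (3/2) 1), (Rlt_dec (3/2) (3/2)); simpl in Hlow; lra.
Qed.

End DiracReset.

Theorem mainTheorem15 :
  (forall mu : R, 0 < mu ->
     forall (S : ProbSpace) (T Rs : nat -> Omega S -> Rbar),
       reset_setup S T Rs Tbar (exp_tail mu) ->
       tilde_st_le S T Rs Tbar)
  /\
  (exists r : R, 0 < r /\
     forall (S : ProbSpace) (T Rs : nat -> Omega S -> Rbar),
       reset_setup S T Rs Tbar (dirac_tail r) ->
       ~ tilde_st_le S T Rs Tbar).
Proof.
  split.
  - intros mu Hmu S T Rs; apply exp_resets_st_le, Hmu.
  - exists (9/10); split; [lra |].
    intros S T Rs; apply dirac_reset_not_st_le.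
Qed.
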